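(* Let $m,n$ be integers with $m\equiv n\equiv 0\pmod 4$ and $m,n>4$. Then the direct product $C_m\times C_n$ is a distance magic graph, but it is not a balanced distance magic graph.
   Context: All graphs are finite and simple; $C_n$ denotes the cycle on $n$ vertices. For a graph $G$ and vertex $x$, $N(x)$ is the (open) neighborhood of $x$. A distance magic labeling of a graph $G$ of order $N$ is a bijection $\ell\colon V(G)\to\{1,\dots,N\}$ for which there is a constant $k$ such that $\sum_{y\in N(x)}\ell(y)=k$ for every $x\in V(G)$; $G$ is distance magic if it admits such a labeling. A balanced distance magic labeling of a graph with an even number $N$ of vertices is a distance magic labeling $\ell$ such that for every vertex $w$: whenever $u\in N(w)$ has $\ell(u)=i$, there is $v\in N(w)$ with $\ell(v)=N+1-i$; a graph is balanced distance magic if it has an even number of vertices and admits such a labeling. The direct product $G\times H$ has vertex set $V(G)\times V(H)$, with $(g,h)$ adjacent to $(g',h')$ iff $gg'\in E(G)$ and $hh'\in E(H)$. *)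

From mathcomp Require Import all_boot.
Set Implicit Arguments. Unset Strict Implicit. Unset Printing Implicit Defensive.

(* The cycle C_n on vertex set 'I_n : i ~ j iff j = i+1 mod n or i = j+1 mod n
   (a simple cycle when n >= 3). *)
Definition cycle_adj (n : nat) : rel 'I_n :=
  fun i j => (val j == (val i).+1 %% n) || (val i == (val j).+1 %% n).

Definition direct_prod_adj (T1 T2 : finType) (e1 : rel T1) (e2 : rel T2)
  : rel (T1 * T2) :=
  fun x y => e1 x.1 y.1 && e2 x.2 y.2.

Definition nbr_sum (T : finType) (e : rel T) (l : T -> nat) (x : T) : nat :=
  \sum_(y : T | e x y) l y.

Definition is_labeling (T : finType) (l : T -> nat) : Prop :=
  injective l /\ (forall x, 1 <= l x <= #|T|).

Definition distance_magic_labeling (T : finType) (e : rel T) (l : T -> nat) : Prop :=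
  is_labeling l /\ exists k, forall x, nbr_sum e l x = k.

Definition distance_magic (T : finType) (e : rel T) : Prop :=
  exists l, distance_magic_labeling e l.

Definition balanced_distance_magic_labeling (T : finType) (e : rel T) (l : T -> nat) : Prop :=
  ~~ odd #|T| /\ distance_magic_labeling e l /\
  forall w u, e w u -> exists v, e w v /\ l v = #|T|.+1 - l u.

Definition balanced_distance_magic (T : finType) (e : rel T) : Prop :=
  ~~ odd #|T| /\ exists l, balanced_distance_magic_labeling e l.

From mathcomp Require Import all_boot zify.
Set Implicit Arguments. Unset Strict Implicit. Unset Printing Implicit Defensive.

(* In C_m x C_n the neighbours of (i, j) are the four vertices (i +- 1, j +- 1).
   - Not balanced: for any graph with an even number of vertices, a balanced
     labeling is impossible as soon as two vertices w, w' have exactly one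
     common neighbour u: the "partners" of u seen from w and from w' carry the
     same label, hence coincide, hence equal u, so 2 l(u) = |V| + 1 is odd.
     In the torus, (1, 1) and (-1, -1) have (0, 0) as unique common neighbour
     because m, n > 4.
   - Distance magic: with m = 4M, n = 4N, write i = 4a + r, j = 4b + s and
     label (i, j) by 1 + 16 * (block code of (a, b)) + (residue code of (r, s)),
     where reflections of a and b are controlled by s and r.  Since i + 1 and
     i - 1 have residues differing by 2 mod 4, the four labels around any
     vertex pair each block and residue with its complement, and they always
     add up to 2 (16MN + 1), whatever the blocks of the neighbours are. *)

Lemma iter_ordS n (i : 'I_n) k : val (iter k (@ordS n) i) = (i + k) %% n.
Proof.
elim: k => [|k IH] /=; first by rewrite addn0 modn_small.
by rewrite IH -addn1 modnDml addn1 addnS.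
Qed.

Lemma iter_ordS_neq n (i : 'I_n) k : 0 < k < n -> iter k (@ordS n) i != i.
Proof.
move=> /andP[k_gt0 k_lt_n]; apply/negP => /eqP/(congr1 val).
rewrite iter_ordS => ik_eq_i.
have : i + k == i + 0 %[mod n] by rewrite addn0 ik_eq_i modn_small.
by rewrite eqn_modDl mod0n modn_small // => /eqP k0; rewrite k0 in k_gt0.
Qed.

Lemma cycle_adjE n (i j : 'I_n) : cycle_adj i j = (j == ordS i) || (j == ord_pred i).
Proof.
rewrite /cycle_adj.
have -> : (val i == (val j).+1 %% n) = (ord_pred i == j).
  by rewrite -(inj_eq (@ordS_inj n)) ord_predK.
by rewrite (eq_sym (ord_pred i)).
Qed.

Lemma ordS_neq_ord_pred n (i : 'I_n) : 2 < n -> ordS i != ord_pred i.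
Proof.
by move=> n_gt2; rewrite -(inj_eq (@ordS_inj n)) ord_predK (@iter_ordS_neq n i 2).
Qed.

Lemma cycle_nbr_sum n (F : 'I_n -> nat) (i : 'I_n) : 2 < n ->
  nbr_sum (@cycle_adj n) F i = F (ordS i) + F (ord_pred i).
Proof.
move=> n_gt2; rewrite /nbr_sum (bigD1 (ordS i)) ?cycle_adjE ?eqxx //=.
rewrite (bigD1 (ord_pred i)) /=; last by rewrite cycle_adjE eqxx orbT eq_sym ordS_neq_ord_pred.
rewrite big1 ?addn0 // => j; rewrite cycle_adjE.
by case/andP=> /andP[adj /negbTE ne1] /negbTE ne2; rewrite ne1 ne2 in adj.
Qed.

(* For n > 4 the two neighbours of u in C_n have u as only common neighbour
   (for n = 4 they also share the antipode of u). *)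
Lemma cycle_common_nbr n (u v : 'I_n) : 4 < n ->
  cycle_adj (ordS u) v -> cycle_adj (ord_pred u) v -> v = u.
Proof.
move=> n_gt4; rewrite !cycle_adjE ordSK ord_predK.
case/orP=> [/eqP v_ss | /eqP //]; case/orP=> [/eqP // | /eqP v_pp].
have /negP[] := @iter_ordS_neq n u 4 n_gt4.
by rewrite /= -v_ss v_pp !ord_predK.
Qed.

Lemma ordS_mod n d (i : 'I_n) : d %| n -> ordS i = ord_pred i + 2 %[mod d].
Proof.
move=> dvd_dn; have -> : ordS i = iter 2 (@ordS n) (ord_pred i) by rewrite /= ord_predK.
by rewrite iter_ordS modn_dvdm.
Qed.

Lemma prod_nbr_sum (T1 T2 : finType) (e1 : rel T1) (e2 : rel T2)
    (l : T1 * T2 -> nat) (x1 : T1) (x2 : T2) :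
  nbr_sum (direct_prod_adj e1 e2) l (x1, x2) =
  nbr_sum e1 (fun y1 => nbr_sum e2 (fun y2 => l (y1, y2)) x2) x1.
Proof. by rewrite /nbr_sum pair_big_dep; apply: eq_bigr => -[]. Qed.

Lemma torus_nbr_sum m n (l : 'I_m * 'I_n -> nat) (i : 'I_m) (j : 'I_n) :
  2 < m -> 2 < n ->
  nbr_sum (direct_prod_adj (@cycle_adj m) (@cycle_adj n)) l (i, j) =
  l (ordS i, ordS j) + l (ordS i, ord_pred j)
  + l (ord_pred i, ordS j) + l (ord_pred i, ord_pred j).
Proof. by move=> m_gt2 n_gt2; rewrite prod_nbr_sum !cycle_nbr_sum // addnA. Qed.

Lemma no_balanced_of_unique_common_nbr (T : finType) (e : rel T) (l : T -> nat)
    (w w' u : T) :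
  e w u -> e w' u -> (forall v, e w v -> e w' v -> v = u) ->
  ~ balanced_distance_magic_labeling e l.
Proof.
move=> wu w'u common_u [even_T [[[l_inj l_range] _] balanced]].
have [v [wv lv]] := balanced _ _ wu.
have [v' [w'v' lv']] := balanced _ _ w'u.
have vv' : v = v' by apply: l_inj; rewrite lv lv'.
have vu : v = u by apply: common_u; rewrite // vv'.
have /andP[lu_ge1 lu_le] := l_range u.
have card_double : #|T|.+1 = (l u).*2 by rewrite vu in lv; lia.
by move: even_T; rewrite -oddS card_double odd_double.
Qed.

Lemma torus_not_balanced m n : 4 < m -> 4 < n ->
  ~ balanced_distance_magic (direct_prod_adj (@cycle_adj m) (@cycle_adj n)).
Proof.
case: m => [//|m]; case: n => [//|n] m_gt4 n_gt4 [_ [l]].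
have adj_pred u : cycle_adj (ord_pred u) u by rewrite cycle_adjE ord_predK eqxx.
have adj_succ u : cycle_adj (ordS u) u by rewrite cycle_adjE ordSK eqxx orbT.
apply: (@no_balanced_of_unique_common_nbr _ _ _
  (ordS ord0, ordS ord0) (ord_pred ord0, ord_pred ord0) (ord0, ord0)).
- by rewrite /direct_prod_adj /= !adj_succ.
- by rewrite /direct_prod_adj /= !adj_pred.
- move=> [v1 v2] /andP[/= adj1 adj2] /andP[/= adj1' adj2'].
  by rewrite (cycle_common_nbr m_gt4 adj1 adj1') (cycle_common_nbr n_gt4 adj2 adj2').
Qed.

Lemma mixed_radix_lt K L x y : x < L -> y < K -> K * x + y < K * L.
Proof. by move=> xL yK; nia. Qed.

Lemma mixed_radix_inj K x y x' y' : y < K -> y' < K ->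
  K * x + y = K * x' + y' -> x = x' /\ y = y'.
Proof.
move=> yK y'K e.
have yy' : y = y' by move: (congr1 (modn^~ K) e); rewrite /= ![K * _]mulnC !modnMDl !modn_small.
split=> //; apply/eqP; rewrite -(eqn_pmul2l (leq_ltn_trans (leq0n y) yK)).
by rewrite -(eqn_add2r y) e yy'.
Qed.

Definition mirror (K : nat) (c : bool) (x : nat) : nat := if c then K.-1 - x else x.

Lemma mirror_lt K c x : x < K -> mirror K c x < K.
Proof. by rewrite /mirror; case: c; lia. Qed.

Lemma mirror_inj K c x x' : x < K -> x' < K -> mirror K c x = mirror K c x' -> x = x'.
Proof. by rewrite /mirror; case: c; lia. Qed.

Lemma mirrorC K c x : x < K -> mirror K c x + mirror K (~~ c) x = K.-1.
Proof. by rewrite /mirror; case: c => /=; lia. Qed.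

Lemma ltn_mod4 k : k %% 4 < 4.
Proof. by rewrite ltn_mod. Qed.

Lemma ltn_div4 K k : k < K * 4 -> k %/ 4 < K.
Proof. by rewrite ltn_divLR. Qed.

(* Residues r, s < 4 are coded by a bijection onto [0, 16): each coordinate is
   kept or swapped within its pair {0,1} / {2,3} depending on whether the
   other residue is low (< 2) or high. *)
Definition pair_swap (r : nat) : nat := if odd r then r.-1 else r.+1.

Definition residue_code (r s : nat) : nat :=
  4 * (if s < 2 then r else pair_swap r) + (if r < 2 then s else pair_swap s).

Lemma residue_code_lt r s : r < 4 -> s < 4 -> residue_code r s < 16.
Proof. by do 4?[case: r => [|r] //]; do 4?[case: s => [|s] //]. Qed.

Lemma residue_code_inj r s r' s' : r < 4 -> s < 4 -> r' < 4 -> s' < 4 ->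
  residue_code r s = residue_code r' s' -> r = r' /\ s = s'.
Proof.
by do 4?[case: r => [|r] //]; do 4?[case: s => [|s] //];
   do 4?[case: r' => [|r'] //]; do 4?[case: s' => [|s'] //].
Qed.

(* The codes of the four residue pairs obtained by shifting r and s by 2 sum
   to 0 + 1 + ... + 3 in each digit, i.e. 4 * 6 + 6. *)
Lemma residue_code_square r s : r < 4 -> s < 4 ->
  residue_code r s + residue_code ((r + 2) %% 4) s
  + residue_code r ((s + 2) %% 4) + residue_code ((r + 2) %% 4) ((s + 2) %% 4) = 30.
Proof. by do 4?[case: r => [|r] //]; do 4?[case: s => [|s] //]. Qed.

Lemma high_residue_shift r : r < 4 -> (1 < (r + 2) %% 4) = ~~ (1 < r).
Proof. by do 4?[case: r => [|r] //]. Qed.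

Section TorusLabel.

Variables M N : nat.

Definition block_code (i j : nat) : nat :=
  M * mirror N (1 < i %% 4) (j %/ 4) + mirror M (1 < j %% 4) (i %/ 4).

Definition torus_label (i j : nat) : nat :=
  (16 * block_code i j + residue_code (i %% 4) (j %% 4)).+1.

Lemma block_code_lt i j : i < M * 4 -> j < N * 4 -> block_code i j < M * N.
Proof.
move=> /ltn_div4 a_lt /ltn_div4 b_lt.
exact: mixed_radix_lt (mirror_lt _ b_lt) (mirror_lt _ a_lt).
Qed.

Lemma torus_label_range i j : i < M * 4 -> j < N * 4 ->
  1 <= torus_label i j <= M * 4 * (N * 4).
Proof.
move=> hi hj; have := block_code_lt hi hj.
have := residue_code_lt (ltn_mod4 i) (ltn_mod4 j).
rewrite /torus_label; lia.
Qed.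

Lemma torus_label_inj i j i' j' :
  i < M * 4 -> j < N * 4 -> i' < M * 4 -> j' < N * 4 ->
  torus_label i j = torus_label i' j' -> i = i' /\ j = j'.
Proof.
move=> /ltn_div4 hi /ltn_div4 hj /ltn_div4 hi' /ltn_div4 hj' /succn_inj e.
have [e_blocks e_res] := mixed_radix_inj
  (residue_code_lt (ltn_mod4 i) (ltn_mod4 j)) (residue_code_lt (ltn_mod4 i') (ltn_mod4 j')) e.
have [e_r e_s] := residue_code_inj (ltn_mod4 i) (ltn_mod4 j) (ltn_mod4 i') (ltn_mod4 j') e_res.
move: e_blocks; rewrite /block_code e_r e_s => e_blocks.
have [/(mirror_inj hj hj') e_b /(mirror_inj hi hi') e_a] :=
  mixed_radix_inj (mirror_lt _ hi) (mirror_lt _ hi') e_blocks.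
by rewrite (divn_eq i 4) (divn_eq j 4) e_r e_s e_a e_b -!divn_eq.
Qed.

Lemma torus_label_square i i' j j' :
  i < M * 4 -> i' < M * 4 -> j < N * 4 -> j' < N * 4 ->
  i' = i + 2 %[mod 4] -> j' = j + 2 %[mod 4] ->
  torus_label i j + torus_label i' j + torus_label i j' + torus_label i' j'
  = 2 * (16 * M * N + 1).
Proof.
move=> hi hi' hj hj'; rewrite -modnDml -[(j + 2) %% 4]modnDml => e_r' e_s'.
have blocks : block_code i j + block_code i' j + block_code i j' + block_code i' j'
              = 2 * (M * N.-1) + 2 * M.-1.
  rewrite /block_code e_r' e_s' !high_residue_shift ?ltn_mod4 //.
  have row_pair c b : b < N -> M * mirror N c b + M * mirror N (~~ c) b = M * N.-1.
    by move=> /(mirrorC c) <-; rewrite mulnDr.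
  have := row_pair (1 < i %% 4) _ (ltn_div4 hj).
  have := row_pair (1 < i %% 4) _ (ltn_div4 hj').
  have := mirrorC (1 < j %% 4) (ltn_div4 hi).
  have := mirrorC (1 < j %% 4) (ltn_div4 hi').
  lia.
have MN : M * N.-1 + M = M * N by rewrite -mulnSr prednK //; lia.
have := residue_code_square (ltn_mod4 i) (ltn_mod4 j).
move: blocks; rewrite /torus_label e_r' e_s'; lia.
Qed.

End TorusLabel.

Lemma torus_distance_magic M N : 0 < M -> 0 < N ->
  distance_magic (direct_prod_adj (@cycle_adj (M * 4)) (@cycle_adj (N * 4))).
Proof.
move=> M_gt0 N_gt0.
have card_torus : #|{: 'I_(M * 4) * 'I_(N * 4)}| = M * 4 * (N * 4).
  by rewrite card_prod !card_ord.
exists (fun x : 'I_(M * 4) * 'I_(N * 4) => torus_label M N x.1 x.2); split; first split.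
- move=> [i j] [i' j'] /= /torus_label_inj[] // e_i e_j.
  by congr pair; apply: val_inj.
- by move=> [i j]; rewrite card_torus torus_label_range.
- exists (2 * (16 * M * N + 1)) => -[i j].
  rewrite torus_nbr_sum; [cbn -[ordS ord_pred torus_label] | lia..].
  have := torus_label_square (ltn_ord (ord_pred i)) (ltn_ord (ordS i))
    (ltn_ord (ord_pred j)) (ltn_ord (ordS j))
    (ordS_mod i (dvdn_mull M (dvdnn 4))) (ordS_mod j (dvdn_mull N (dvdnn 4))).
  lia.
Qed.

Theorem mainTheorem10 (m n : nat) :
  4 %| m -> 4 %| n -> 4 < m -> 4 < n ->
  distance_magic (direct_prod_adj (@cycle_adj m) (@cycle_adj n)) /\
  ~ balanced_distance_magic (direct_prod_adj (@cycle_adj m) (@cycle_adj n)).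
Proof.
move=> /dvdnP[M ->] /dvdnP[N ->] m_gt4 n_gt4.
by split; [apply: torus_distance_magic | apply: torus_not_balanced]; lia.
Qed.
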